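(* Let $c>0$, $f_s>0$, let $M,N,K\ge1$ be integers, set $T_{\max}=(N-1)/f_s$, and let $\bm{r}^{\mathrm{mic}}_1,\dots,\bm{r}^{\mathrm{mic}}_M\in\mathbb{R}^3$ with $E_M=\{\bm{r}^{\mathrm{mic}}_m\}$. Let $\kappa:\mathbb{R}\to\mathbb{R}$ be continuous with $\kappa(0)>0$ and $\lim_{|t|\to+\infty}\kappa(t)=0$, and assume $$\forall \tau\in\Big[0,\frac{N-1}{f_s}\Big],\qquad \sum_{n=0}^{N-1}\kappa(n/f_s-\tau)>0.$$ Then $\Gamma^K$ is amplitude lower-bounded, i.e. there is $C>0$ with $\|\Gamma^K(\bm{a},\bm{r})\|_2\ge C\sum_{k=1}^K a_k$ for all $(\bm{a},\bm{r})\in\mathbb{R}_+^K\times\mathscr{C}^K$.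
   Context: $\mathbb{R}_+=[0,+\infty)$, $\|\cdot\|_2$ is the Euclidean norm. For $\bm{r}\in\mathbb{R}^3\setminus E_M$, $\gamma(\bm{r})\in\mathbb{R}^{MN}$ has components $\gamma_{m,n}(\bm{r})=\dfrac{\kappa\big(n/f_s-\|\bm{r}-\bm{r}^{\mathrm{mic}}_m\|_2/c\big)}{4\pi\|\bm{r}-\bm{r}^{\mathrm{mic}}_m\|_2}$, $1\le m\le M$, $0\le n\le N-1$. $\mathscr{C}=\bigcap_{m=1}^M\overline{B(\bm{r}^{\mathrm{mic}}_m,cT_{\max})}\setminus E_M$. $\Gamma^K(\bm{a},\bm{r})=\sum_{k=1}^K a_k\gamma(\bm{r}_k)$ for $\bm{a}\in\mathbb{R}_+^K$, $\bm{r}=(\bm{r}_1,\dots,\bm{r}_K)\in\mathscr{C}^K$. *)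

From Stdlib Require Import Reals List.
Import ListNotations.
Open Scope R_scope.

Definition R3 : Type := (R * R * R)%type.

Definition dist3 (p q : R3) : R :=
  let '(x1, y1, z1) := p in let '(x2, y2, z2) := q in
  sqrt ((x1 - x2) ^ 2 + (y1 - y2) ^ 2 + (z1 - z2) ^ 2).

Definition fsum (n : nat) (f : nat -> R) : R :=
  fold_right Rplus 0 (map f (seq 0 n)).

(* gamma_{m,n}(r) (m, n are 0-based indices: m < M, n < N) *)
Definition gamma_mn (kappa : R -> R) (c fs : R) (mic : nat -> R3)
  (r : R3) (m n : nat) : R :=
  kappa (INR n / fs - dist3 r (mic m) / c) / (4 * PI * dist3 r (mic m)).

Definition inC (c Tmax : R) (M : nat) (mic : nat -> R3) (r : R3) : Prop :=
  (forall m, (m < M)%nat -> dist3 r (mic m) <= c * Tmax) /\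
  (forall m, (m < M)%nat -> r <> mic m).

Definition GammaK_norm (kappa : R -> R) (c fs : R) (M N K : nat)
  (mic : nat -> R3) (a : nat -> R) (r : nat -> R3) : R :=
  sqrt (fsum M (fun m => fsum N (fun n =>
     (fsum K (fun k => a k * gamma_mn kappa c fs mic (r k) m n)) ^ 2))).

(* For r in C the delay
   tau = |r - mic_0| / c lies in [0, Tmax], where the continuous positive
   function tau |-> sum_n kappa (n/fs - tau) has a positive minimum delta,
   while the attenuation 1 / (4 pi |r - mic_0|) is at least 1 / (4 pi c Tmax).
   As the amplitudes are nonnegative, the N samples of Gamma^K(a, r) at the
   first microphone therefore add up to at least beta * sum_k a_k, and
   Cauchy-Schwarz turns this into the bound with C = beta / sqrt N. *)

From Stdlib Require Import Reals List Lra Lia Psatz.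
Open Scope R_scope.

Lemma fold_right_Rplus_init (l : list R) (x : R) :
  fold_right Rplus x l = fold_right Rplus 0 l + x.
Proof. induction l as [|y l IH]; simpl; [|rewrite IH]; ring. Qed.

Lemma fsum_S (n : nat) (f : nat -> R) : fsum (S n) f = fsum n f + f n.
Proof.
  unfold fsum; rewrite seq_S, map_app, fold_right_app; simpl.
  rewrite fold_right_Rplus_init; ring.
Qed.

Lemma fsum_ext (n : nat) (f g : nat -> R) :
  (forall i, (i < n)%nat -> f i = g i) -> fsum n f = fsum n g.
Proof.
  induction n as [|n IH]; intro Hfg; [reflexivity|].
  rewrite !fsum_S, IH, Hfg; auto with arith.
Qed.

Lemma fsum_plus (n : nat) (f g : nat -> R) :
  fsum n (fun i => f i + g i) = fsum n f + fsum n g.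
Proof. induction n as [|n IH]; [unfold fsum; simpl; ring|rewrite !fsum_S, IH; ring]. Qed.

Lemma fsum_scal_l (n : nat) (c : R) (f : nat -> R) :
  fsum n (fun i => c * f i) = c * fsum n f.
Proof. induction n as [|n IH]; [unfold fsum; simpl; ring|rewrite !fsum_S, IH; ring]. Qed.

Lemma fsum_comm (m n : nat) (f : nat -> nat -> R) :
  fsum m (fun i => fsum n (fun j => f i j)) = fsum n (fun j => fsum m (fun i => f i j)).
Proof.
  induction m as [|m IH].
  - induction n as [|n IHn]; [reflexivity|rewrite fsum_S, <- IHn; unfold fsum; simpl; ring].
  - rewrite fsum_S, IH, <- fsum_plus.
    apply fsum_ext; intros j _; now rewrite fsum_S.
Qed.

Lemma fsum_le (n : nat) (f g : nat -> R) :
  (forall i, (i < n)%nat -> f i <= g i) -> fsum n f <= fsum n g.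
Proof.
  induction n as [|n IH]; intro Hfg; [unfold fsum; simpl; lra|].
  rewrite !fsum_S; apply Rplus_le_compat; auto with arith.
Qed.

Lemma fsum_ge0 (n : nat) (f : nat -> R) :
  (forall i, (i < n)%nat -> 0 <= f i) -> 0 <= fsum n f.
Proof.
  induction n as [|n IH]; intro Hf; [unfold fsum; simpl; lra|].
  rewrite fsum_S; apply Rplus_le_le_0_compat; auto with arith.
Qed.

Lemma fsum_term_le (n : nat) (f : nat -> R) (i : nat) :
  (forall j, (j < n)%nat -> 0 <= f j) -> (i < n)%nat -> f i <= fsum n f.
Proof.
  induction n as [|n IH]; intros Hf Hi; [lia|].
  rewrite fsum_S.
  assert (Hsum : 0 <= fsum n f) by (apply fsum_ge0; auto with arith).
  destruct (Nat.eq_dec i n) as [->|Hne].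
  - lra.
  - assert (f i <= fsum n f) by (apply IH; [auto with arith|lia]).
    assert (0 <= f n) by auto with arith.
    lra.
Qed.

Lemma fsum_Cauchy_Schwarz (n : nat) (f : nat -> R) :
  fsum n f ^ 2 <= INR n * fsum n (fun i => f i ^ 2).
Proof.
  induction n as [|n IH]; [unfold fsum; simpl; lra|].
  rewrite !fsum_S, S_INR.
  set (S := fsum n f) in *; set (Q := fsum n (fun i => f i ^ 2)) in *.
  assert (HQ : 0 <= Q) by (apply fsum_ge0; intros; apply pow2_ge_0).
  pose proof (pos_INR n).
  (* times n, this follows from n Q >= S^2 and S^2 + n^2 (f n)^2 >= 2 n S (f n) *)
  assert (Hcross : 2 * S * f n <= Q + INR n * f n ^ 2).
  { destruct (Req_dec (INR n) 0) as [Hn|Hn].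
    - rewrite Hn in IH |- *.
      assert (HS : S = 0) by nra.
      rewrite HS; lra.
    - apply (Rmult_le_reg_l (INR n)); [lra|].
      pose proof (pow2_ge_0 (S - INR n * f n)).
      nra. }
  nra.
Qed.

Lemma fsum_le_sqrt_sum_sq (n : nat) (f : nat -> R) :
  fsum n f <= sqrt (INR n) * sqrt (fsum n (fun i => f i ^ 2)).
Proof.
  pose proof (sqrt_pos (INR n)); pose proof (sqrt_pos (fsum n (fun i => f i ^ 2))).
  destruct (Rle_or_lt (fsum n f) 0) as [Hneg|Hpos]; [nra|].
  rewrite <- sqrt_mult_alt by apply pos_INR.
  rewrite <- (sqrt_pow2 (fsum n f)) by lra.
  apply sqrt_le_1_alt, fsum_Cauchy_Schwarz.
Qed.

Lemma continuity_fsum (n : nat) (f : nat -> R -> R) :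
  (forall i, continuity (f i)) -> continuity (fun x => fsum n (fun i => f i x)).
Proof.
  intro Hf; induction n as [|n IH].
  - apply continuity_const; intros x y; reflexivity.
  - intro x.
    apply (continuity_pt_locally_ext (fun x => fsum n (fun i => f i x) + f n x) _ 1);
      [lra|intros; symmetry; apply fsum_S|].
    apply continuity_plus; auto.
Qed.

Lemma continuity_fsum_shift (kappa : R -> R) (fs : R) (N : nat) :
  continuity kappa -> continuity (fun tau => fsum N (fun n => kappa (INR n / fs - tau))).
Proof.
  intro Hkappa.
  apply (continuity_fsum N (fun n tau => kappa (INR n / fs - tau))); intro n.
  apply (continuity_comp (fun tau => INR n / fs - tau)); [|exact Hkappa].
  apply continuity_minus; [apply continuity_const; now intros|].
  apply derivable_continuous, derivable_id.
Qed.

Lemma continuity_pos_lower_bound (g : R -> R) (a b : R) :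
  continuity g -> a <= b -> (forall x, a <= x <= b -> 0 < g x) ->
  exists delta, 0 < delta /\ forall x, a <= x <= b -> delta <= g x.
Proof.
  intros Hg Hab Hpos.
  destruct (continuity_ab_min g a b Hab) as [xmin [Hmin Hxmin]]; [intros; apply Hg|].
  exists (g xmin); auto.
Qed.

Lemma dist3_pos (p q : R3) : p <> q -> 0 < dist3 p q.
Proof.
  destruct p as [[x1 y1] z1], q as [[x2 y2] z2]; simpl; intro Hpq.
  apply sqrt_lt_R0.
  assert (Hsq : forall s t, s <> t -> 0 < (s - t) ^ 2).
  { intros s t Hst; rewrite <- Rsqr_pow2; apply Rsqr_pos_lt, Rminus_eq_contra, Hst. }
  pose proof (pow2_ge_0 (x1 - x2)); pose proof (pow2_ge_0 (y1 - y2));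
    pose proof (pow2_ge_0 (z1 - z2)).
  destruct (Req_dec x1 x2) as [->|Hx]; [destruct (Req_dec y1 y2) as [->|Hy];
    [destruct (Req_dec z1 z2) as [->|Hz]|]|].
  - congruence.
  - pose proof (Hsq _ _ Hz); lra.
  - pose proof (Hsq _ _ Hy); lra.
  - pose proof (Hsq _ _ Hx); lra.
Qed.

Lemma fsum_weighted_lower_bound (K N : nat) (a : nat -> R) (h : nat -> nat -> R) (beta : R) :
  (forall k, (k < K)%nat -> 0 <= a k) ->
  (forall k, (k < K)%nat -> beta <= fsum N (h k)) ->
  beta * fsum K a <= fsum N (fun n => fsum K (fun k => a k * h k n)).
Proof.
  intros Ha Hh.
  rewrite fsum_comm, <- fsum_scal_l.
  apply fsum_le; intros k Hk.
  rewrite fsum_scal_l, (Rmult_comm beta).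
  apply Rmult_le_compat_l; auto.
Qed.

Lemma fsum_gamma_lower_bound (kappa : R -> R) (c fs Tmax delta D : R) (N : nat)
    (mic : nat -> R3) (r : R3) (m : nat) :
  0 < c -> 0 <= delta ->
  (forall tau, 0 <= tau <= Tmax -> delta <= fsum N (fun n => kappa (INR n / fs - tau))) ->
  0 < dist3 r (mic m) <= c * Tmax -> c * Tmax <= D ->
  delta / (4 * PI * D) <= fsum N (fun n => gamma_mn kappa c fs mic r m n).
Proof.
  intros Hc Hdelta Hmin [Hd HdT] HD.
  unfold gamma_mn; set (d := dist3 r (mic m)) in *.
  pose proof PI_RGT_0.
  rewrite (fsum_ext _ _ (fun n => / (4 * PI * d) * kappa (INR n / fs - d / c)))
    by (intros; unfold Rdiv; ring).
  rewrite fsum_scal_l.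
  assert (Hdelay : delta <= fsum N (fun n => kappa (INR n / fs - d / c))).
  { apply Hmin; split.
    - apply Rlt_le, Rdiv_lt_0_compat; lra.
    - apply (Rmult_le_reg_l c); [lra|]; field_simplify; lra. }
  assert (Hatt : / (4 * PI * D) <= / (4 * PI * d)) by (apply Rinv_le_contravar; nra).
  apply Rle_trans with (/ (4 * PI * d) * delta).
  - unfold Rdiv; rewrite Rmult_comm; apply Rmult_le_compat_r; lra.
  - apply Rmult_le_compat_l; [apply Rlt_le, Rinv_0_lt_compat; nra|exact Hdelay].
Qed.

Lemma GammaK_norm_ge_mic (kappa : R -> R) (c fs : R) (M N K : nat) (mic : nat -> R3)
    (a : nat -> R) (r : nat -> R3) (m : nat) :
  (m < M)%nat ->
  sqrt (fsum N (fun n => fsum K (fun k => a k * gamma_mn kappa c fs mic (r k) m n) ^ 2))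
    <= GammaK_norm kappa c fs M N K mic a r.
Proof.
  intro Hm; apply sqrt_le_1_alt.
  apply (fsum_term_le M (fun m => fsum N (fun n =>
    fsum K (fun k => a k * gamma_mn kappa c fs mic (r k) m n) ^ 2))); [|exact Hm].
  intros; apply fsum_ge0; intros; apply pow2_ge_0.
Qed.

Theorem proposition2
  (c fs : R) (M N K : nat) (mic : nat -> R3) (kappa : R -> R) :
  0 < c -> 0 < fs -> (1 <= M)%nat -> (1 <= N)%nat -> (1 <= K)%nat ->
  continuity kappa ->
  0 < kappa 0 ->
  (forall eps, 0 < eps -> exists T, forall t, T < Rabs t -> Rabs (kappa t) < eps) ->
  (forall tau, 0 <= tau <= INR (N - 1) / fs ->
     0 < fsum N (fun n => kappa (INR n / fs - tau))) ->
  exists C, 0 < C /\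
    forall (a : nat -> R) (r : nat -> R3),
      (forall k, (k < K)%nat -> 0 <= a k) ->
      (forall k, (k < K)%nat -> inC c (INR (N - 1) / fs) M mic (r k)) ->
      GammaK_norm kappa c fs M N K mic a r >= C * fsum K a.
Proof.
  intros Hc Hfs HM HN _ Hkappa _ _ Hpos.
  set (Tmax := INR (N - 1) / fs) in *.
  assert (HTmax : 0 <= Tmax)
    by (apply Rmult_le_pos; [apply pos_INR|apply Rlt_le, Rinv_0_lt_compat, Hfs]).
  destruct (continuity_pos_lower_bound _ 0 Tmax (continuity_fsum_shift kappa fs N Hkappa)
              HTmax Hpos) as [delta [Hdelta Hmin]].
  (* the + 1 keeps beta positive when N = 1, i.e. Tmax = 0 *)
  set (beta := delta / (4 * PI * (c * Tmax + 1))).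
  assert (Hbeta : 0 < beta).
  { pose proof PI_RGT_0; pose proof (Rmult_le_pos _ _ (Rlt_le _ _ Hc) HTmax).
    apply Rdiv_lt_0_compat; [lra|nra]. }
  assert (HsN : 0 < sqrt (INR N)) by (apply sqrt_lt_R0, lt_0_INR; lia).
  exists (beta / sqrt (INR N)); split; [apply Rdiv_lt_0_compat; lra|].
  intros a r Ha Hr.
  set (x := fun n => fsum K (fun k => a k * gamma_mn kappa c fs mic (r k) 0 n)).
  assert (Hsum : beta * fsum K a <= fsum N x).
  { apply fsum_weighted_lower_bound; [exact Ha|intros k Hk].
    destruct (Hr k Hk) as [Hball Hneq].
    apply (fsum_gamma_lower_bound _ _ _ Tmax); [lra|lra|exact Hmin| |lra].
    split; [apply dist3_pos, Hneq|apply Hball]; lia. }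
  pose proof (fsum_le_sqrt_sum_sq N x) as HCS.
  apply Rle_ge, Rle_trans with (sqrt (fsum N (fun n => x n ^ 2)));
    [|apply (GammaK_norm_ge_mic _ _ _ _ _ _ _ _ _ 0); lia].
  apply (Rmult_le_reg_l (sqrt (INR N))); [lra|].
  replace (sqrt (INR N) * (beta / sqrt (INR N) * fsum K a)) with (beta * fsum K a)
    by (field; lra).
  lra.
Qed.
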